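(* Let $M\ge2$, $N,K\ge1$ be integers, $B\in\mathbb R$, and for $n=1,\dots,N$, $k=1,\dots,K$ let $S^{(2)}_{n,k}\ge 0$ and $S^{(3)}_{n,k}>0$ be given real numbers. Consider the problem, over real variables $\{B_{n,k}\}$ (no integrality or nonnegativity constraint), $$\min_{\{B_{n,k}\}}\ \prod_{n=1}^N\prod_{k=1}^K\Big(1+S^{(2)}_{n,k}+\Gamma\!\Big(\tfrac{2M-1}{M-1}\Big)2^{-\frac{B_{n,k}}{M-1}}S^{(3)}_{n,k}\Big)\quad\text{s.t.}\quad \sum_{n=1}^N\sum_{k=1}^K B_{n,k}\le B .$$ Its solution is $$B^\star_{n,k}=\frac{B}{NK}+(M-1)\log_2\!\Big(\frac{S^{(3)}_{n,k}}{1+S^{(2)}_{n,k}}\Big)+\frac{M-1}{NK}\sum_{p=1}^N\sum_{q=1}^K\log_2\!\Big(\frac{1+S^{(2)}_{p,q}}{S^{(3)}_{p,q}}\Big).$$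
   Context: $\Gamma$ denotes the Euler Gamma function. (In the paper, $S^{(2)}_{n,k}$ and $S^{(3)}_{n,k}$ are the normalized intra-cluster and inter-cluster interference powers of user $(n,k)$ and $B_{n,k}$ its number of CSI feedback bits, but the statement is purely about the optimization problem above.) *)

From Stdlib Require Import Reals.
From Coquelicot Require Import Coquelicot.
Open Scope R_scope.

Definition Gamma (x : R) : R :=
  RInt_gen (fun t => Rpower t (x - 1) * exp (- t)) (at_right 0) (Rbar_locally p_infty).

Definition log2 (x : R) : R := ln x / ln 2.

Fixpoint rsum (n : nat) (f : nat -> R) : R :=
  match n with O => 0 | S m => rsum m f + f m end.
Fixpoint rprod (n : nat) (f : nat -> R) : R :=
  match n with O => 1 | S m => rprod m f * f m end.

(* Indices n = 1..N, k = 1..K of the paper are encoded 0-based: n < N, k < K. *)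
Definition objective (M N K : nat) (S2 S3 Bv : nat -> nat -> R) : R :=
  rprod N (fun n => rprod K (fun k =>
    1 + S2 n k
    + Gamma ((2 * INR M - 1) / (INR M - 1))
      * Rpower 2 (- Bv n k / (INR M - 1)) * S3 n k)).

Definition feasible (N K : nat) (B : R) (Bv : nat -> nat -> R) : Prop :=
  rsum N (fun n => rsum K (fun k => Bv n k)) <= B.

Definition is_minimizer (M N K : nat) (B : R) (S2 S3 Bv : nat -> nat -> R) : Prop :=
  feasible N K B Bv /\
  forall Bv', feasible N K B Bv' -> objective M N K S2 S3 Bv <= objective M N K S2 S3 Bv'.

Definition Bstar (M N K : nat) (B : R) (S2 S3 : nat -> nat -> R) (n k : nat) : R :=
  B / INR (N * K)
  + (INR M - 1) * log2 (S3 n k / (1 + S2 n k))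
  + (INR M - 1) / INR (N * K)
    * rsum N (fun p => rsum K (fun q => log2 ((1 + S2 p q) / S3 p q))).

From Stdlib Require Import Reals Lra Lia.
From Coquelicot Require Import Coquelicot.
Open Scope R_scope.

(* With L = M - 1, the factor of index (n,k) equals (1 + S2) (1 + c e^x), where
   x = (B*_{n,k} - B_{n,k}) ln 2 / L and c = Gamma((2M-1)/(M-1)) 2^(-B*/L) S3 / (1 + S2)
   is the same positive constant for every index; the budget constraint reads
   sum x >= 0.  By convexity of exp, (1 + c) e^(w x) <= 1 + c e^x with w = c/(1+c),
   strictly unless x = 0.  Multiplying, the objective is at least
   prod (1 + S2)(1 + c) e^(w sum x), which is at least its value at B*, with
   equality only at B*.  The one analytic input is c > 0, i.e. that the Gamma
   integral at a point of [1, 3] converges to a positive number: its integrand is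
   positive and continuous, bounded near 0 and O(1/t^2) near infinity. *)

Local Notation ends_0_infty := (filter_prod (at_right 0) (Rbar_locally p_infty)).

Lemma ends_0_infty_box d M : 0 < d -> ends_0_infty (fun ab => 0 < fst ab < d /\ M < snd ab).
Proof.
  intros Hd.
  apply (Filter_prod _ _ _ (fun a => 0 < a < d) (fun b => M < b)); [| now exists M | easy].
  exists (mkposreal d Hd). intros a Ha Ha0. split; [exact Ha0|].
  change (Rabs (a - 0) < d) in Ha. apply Rabs_def2 in Ha. lra.
Qed.

Section DominatedImproperIntegral.

Variables (f : R -> R) (C : R).
Hypothesis f_cont : forall t, 0 < t -> continuous f t.
Hypothesis f_pos : forall t, 0 < t -> 0 < f t.
Hypothesis f_le_near_0 : forall t, 0 < t <= 1 -> f t <= C.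
Hypothesis f_le_near_infty : forall t, 1 <= t -> f t <= C / (t * t).

Lemma dominating_constant_pos : 0 < C.
Proof. apply Rlt_le_trans with (f 1); [apply f_pos | apply f_le_near_0]; lra. Qed.

Lemma ex_RInt_pos_bounds a b : 0 < a -> 0 < b -> ex_RInt f a b.
Proof.
  intros Ha Hb. apply (@ex_RInt_continuous R_CompleteNormedModule).
  intros t Ht. apply f_cont. apply Rlt_le_trans with (Rmin a b); [apply Rmin_glb_lt|]; lra.
Qed.

Lemma RInt_nonneg a b : 0 < a <= b -> 0 <= RInt f a b.
Proof.
  intros Hab. apply RInt_ge_0; [lra | apply ex_RInt_pos_bounds; lra |].
  intros t Ht. apply Rlt_le, f_pos. lra.
Qed.

Lemma RInt_le_near_0 a b : 0 < a <= b -> b <= 1 -> RInt f a b <= (b - a) * C.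
Proof.
  intros Hab Hb. replace ((b - a) * C) with (RInt (fun _ => C) a b) by now rewrite RInt_const.
  apply RInt_le; [lra | apply ex_RInt_pos_bounds; lra | apply ex_RInt_const |].
  intros t Ht. apply f_le_near_0. lra.
Qed.

Lemma is_RInt_inv_sq a b : 0 < a <= b -> is_RInt (fun t => C / (t * t)) a b (C / a - C / b).
Proof.
  intros Hab.
  replace (C / a - C / b) with (minus ((fun t => - C / t) b) ((fun t => - C / t) a))
    by (unfold minus, plus, opp; simpl; field; lra).
  apply (@is_RInt_derive R_CompleteNormedModule); intros t Ht; rewrite Rmin_left in Ht by lra.
  - auto_derive; [lra | field; lra].
  - apply (ex_derive_continuous (fun t => C / (t * t))). auto_derive. nra.
Qed.

Lemma RInt_le_near_infty a b : 1 <= a <= b -> RInt f a b <= C / a.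
Proof.
  intros Hab.
  assert (HCb : 0 < C / b) by (apply Rdiv_lt_0_compat; [apply dominating_constant_pos | lra]).
  apply Rle_trans with (C / a - C / b); [| lra].
  rewrite <- (is_RInt_unique _ _ _ _ (is_RInt_inv_sq a b ltac:(lra))).
  apply RInt_le; [lra | apply ex_RInt_pos_bounds; lra | eexists; apply is_RInt_inv_sq; lra |].
  intros t Ht. apply f_le_near_infty. lra.
Qed.

Lemma RInt_box_deviation a b d M : 0 < a <= d -> d <= 1 -> 1 <= M <= b ->
  0 <= RInt f a b - RInt f d M <= d * C + C / M.
Proof.
  intros Had Hd HMb.
  rewrite <- (RInt_Chasles f a d b), <- (RInt_Chasles f d M b) by (apply ex_RInt_pos_bounds; lra).
  unfold plus; simpl.
  pose proof (RInt_nonneg a d ltac:(lra)). pose proof (RInt_nonneg M b ltac:(lra)).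
  pose proof (RInt_le_near_0 a d ltac:(lra) Hd). pose proof (RInt_le_near_infty M b HMb).
  assert ((d - a) * C <= d * C)
    by (apply Rmult_le_compat_r; [apply Rlt_le, dominating_constant_pos | lra]).
  lra.
Qed.

Lemma RInt_ends_cauchy : exists l, filterlim (fun ab => RInt f (fst ab) (snd ab)) ends_0_infty (locally l).
Proof.
  pose proof dominating_constant_pos as HC.
  apply filterlim_locally_cauchy.
  intros [eps Heps]; simpl.
  set (d := Rmin 1 (eps / (3 * C))). set (M := Rmax 1 (3 * C / eps)).
  assert (Hd : 0 < d) by (apply Rmin_glb_lt; [lra | apply Rdiv_lt_0_compat; lra]).
  assert (HdC : d * C <= eps / 3).
  { apply Rle_trans with (eps / (3 * C) * C); [apply Rmult_le_compat_r; [lra | apply Rmin_r] |].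
    right. field. lra. }
  assert (HCM : C / M <= eps / 3).
  { apply Rle_trans with (C / (3 * C / eps)); [| right; field; lra].
    apply Rmult_le_compat_l; [lra |].
    apply Rinv_le_contravar; [apply Rdiv_lt_0_compat; lra | apply Rmax_r]. }
  (* On this box every [RInt f a b] lies in [[I, I + 2 eps / 3]], where [I = RInt f d M]. *)
  exists (fun ab => 0 < fst ab < d /\ M < snd ab). split; [now apply ends_0_infty_box |].
  intros [a b] [a' b'] [Ha Hb] [Ha' Hb']; simpl in *.
  assert (Hd1 : d <= 1) by apply Rmin_l. assert (HM1 : 1 <= M) by apply Rmax_l.
  pose proof (RInt_box_deviation a b d M ltac:(lra) Hd1 ltac:(lra)).
  pose proof (RInt_box_deviation a' b' d M ltac:(lra) Hd1 ltac:(lra)).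
  change (Rabs (RInt f a' b' - RInt f a b) < eps). apply Rabs_def1; lra.
Qed.

Lemma RInt_gen_ends_pos : 0 < RInt_gen f (at_right 0) (Rbar_locally p_infty).
Proof.
  destruct RInt_ends_cauchy as [l Hl].
  assert (Hgen : is_RInt_gen f (at_right 0) (Rbar_locally p_infty) l).
  { apply (filterlimi_lim_ext_loc (fun ab => RInt f (fst ab) (snd ab))); [| exact Hl].
    apply filter_imp with (2 := ends_0_infty_box 1 1 Rlt_0_1). intros [a b] Hab; simpl in *.
    apply (@RInt_correct R_CompleteNormedModule), ex_RInt_pos_bounds; lra. }
  rewrite (is_RInt_gen_unique _ _ Hgen).
  assert (Hm : 0 < RInt f 1 2).
  { apply RInt_gt_0; [lra | |]; intros t Ht; [apply f_pos | apply f_cont]; lra. }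
  apply Rlt_le_trans with (1 := Hm).
  apply (filterlim_le (F := ends_0_infty) (fun _ => RInt f 1 2) (fun ab => RInt f (fst ab) (snd ab))
           (RInt f 1 2) l); [| apply filterlim_const | exact Hl].
  apply filter_imp with (2 := ends_0_infty_box 1 2 Rlt_0_1). intros [a b] [Ha Hb]; simpl in *.
  rewrite <- (RInt_Chasles f a 1 b), <- (RInt_Chasles f 1 2 b) by (apply ex_RInt_pos_bounds; lra).
  unfold plus; simpl.
  pose proof (RInt_nonneg a 1 ltac:(lra)). pose proof (RInt_nonneg 2 b ltac:(lra)). lra.
Qed.

End DominatedImproperIntegral.

Lemma Rpower_le_1 t y : 0 < t <= 1 -> 0 <= y -> Rpower t y <= 1.
Proof.
  intros Ht Hy. apply Rle_trans with (Rpower 1 y); [now apply Rle_Rpower_l |].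
  unfold Rpower. rewrite ln_1, Rmult_0_r, exp_0. lra.
Qed.

Lemma sq_mul_exp_neg_le t : 0 < t -> t ^ 2 * exp (- t) <= 256 / (t * t).
Proof.
  intros Ht.
  assert (Ht4 : t ^ 4 <= 256 * exp t).
  { assert (E : exp t = exp (t / 4) ^ 4) by (simpl; rewrite Rmult_1_r, <- !exp_plus; f_equal; field).
    pose proof (exp_ineq1_le (t / 4)).
    assert ((t / 4) ^ 4 <= exp (t / 4) ^ 4) by (apply pow_incr; lra).
    replace (t ^ 4) with (256 * (t / 4) ^ 4) by (simpl; field). lra. }
  pose proof (exp_pos t). rewrite exp_Ropp.
  apply Rmult_le_reg_r with (exp t * (t * t)); [apply Rmult_lt_0_compat; nra |].
  replace (t ^ 2 * / exp t * (exp t * (t * t))) with (t ^ 4) by (simpl; field; lra).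
  replace (256 / (t * t) * (exp t * (t * t))) with (256 * exp t) by (field; lra).
  exact Ht4.
Qed.

Lemma Gamma_pos x : 1 <= x <= 3 -> 0 < Gamma x.
Proof.
  intros Hx. apply (RInt_gen_ends_pos _ 256); intros t Ht.
  - apply (ex_derive_continuous (fun t => Rpower t (x - 1) * exp (- t))). auto_derive.
    eexists. apply is_derive_Reals, derivable_pt_lim_power. exact Ht.
  - apply Rmult_lt_0_compat; apply exp_pos.
  - pose proof (Rpower_le_1 t (x - 1) Ht ltac:(lra)).
    assert (exp (- t) <= 1) by (rewrite <- exp_0; apply Rlt_le, exp_increasing; lra).
    pose proof (exp_pos (- t)).
    assert (0 < Rpower t (x - 1)) by apply exp_pos.
    nra.
  - assert (Rpower t (x - 1) <= t ^ 2)
      by (rewrite <- (Rpower_pow 2 t) by lra; apply Rle_Rpower; simpl; lra).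
    eapply Rle_trans; [| apply sq_mul_exp_neg_le; lra].
    apply Rmult_le_compat_r; [apply Rlt_le, exp_pos | assumption].
Qed.

(* Multiply the tangent bounds [exp s >= 1 + s] at [s = - w t] and [s = (1 - w) t]
   by [exp (w t)] and average them with weights [1 - w] and [w]. *)
Lemma exp_convex_lt w t : 0 < w < 1 -> t <> 0 -> exp (w * t) < 1 - w + w * exp t.
Proof.
  intros Hw Ht. set (E := exp (w * t)).
  assert (HE : 0 < E) by apply exp_pos.
  assert (H1 : E * (1 - w * t) < 1).
  { replace 1 with (E * exp (- (w * t))) at 2
      by (unfold E; rewrite <- exp_plus, Rplus_opp_r; apply exp_0).
    apply Rmult_lt_compat_l; [easy |]. pose proof (exp_ineq1 (- (w * t))). nra. }
  assert (H2 : E * (1 + (1 - w) * t) <= exp t).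
  { replace (exp t) with (E * exp ((1 - w) * t)) by (unfold E; rewrite <- exp_plus; f_equal; ring).
    apply Rmult_le_compat_l; [lra | apply exp_ineq1_le]. }
  nra.
Qed.

Lemma one_add_mul_exp_lt c t : 0 < c -> t <> 0 -> (1 + c) * exp (c / (1 + c) * t) < 1 + c * exp t.
Proof.
  intros Hc Ht.
  assert (Hw : 0 < c / (1 + c) < 1).
  { split; [apply Rdiv_lt_0_compat; lra | apply Rmult_lt_reg_r with (1 + c); [lra |]].
    field_simplify; lra. }
  pose proof (exp_convex_lt _ _ Hw Ht).
  replace (1 + c * exp t) with ((1 + c) * (1 - c / (1 + c) + c / (1 + c) * exp t)) by (field; lra).
  apply Rmult_lt_compat_l; lra.
Qed.

Lemma one_add_mul_exp_le c t : 0 < c -> (1 + c) * exp (c / (1 + c) * t) <= 1 + c * exp t.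
Proof.
  intros Hc. destruct (Req_dec t 0) as [-> | Ht].
  - rewrite Rmult_0_r, exp_0. lra.
  - now apply Rlt_le, one_add_mul_exp_lt.
Qed.

Lemma rsum_ext n f g : (forall i, (i < n)%nat -> f i = g i) -> rsum n f = rsum n g.
Proof. induction n; intros H; simpl; [easy |]. rewrite IHn, H; auto; intros; apply H; lia. Qed.

Lemma rsum_plus n f g : rsum n (fun i => f i + g i) = rsum n f + rsum n g.
Proof. induction n; simpl; [ring |]. rewrite IHn; ring. Qed.

Lemma rsum_minus n f g : rsum n (fun i => f i - g i) = rsum n f - rsum n g.
Proof. induction n; simpl; [ring |]. rewrite IHn; ring. Qed.

Lemma rsum_scal n c f : rsum n (fun i => c * f i) = c * rsum n f.
Proof. induction n; simpl; [ring |]. rewrite IHn; ring. Qed.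

Lemma rsum_const n c : rsum n (fun _ => c) = INR n * c.
Proof. induction n; cbn [rsum]; [simpl; ring |]. rewrite IHn, S_INR; ring. Qed.

Lemma rprod_ext n f g : (forall i, (i < n)%nat -> f i = g i) -> rprod n f = rprod n g.
Proof. induction n; intros H; simpl; [easy |]. rewrite IHn, H; auto; intros; apply H; lia. Qed.

Lemma rprod_pos n f : (forall i, (i < n)%nat -> 0 < f i) -> 0 < rprod n f.
Proof.
  induction n; intros H; simpl; [lra |].
  apply Rmult_lt_0_compat; [apply IHn; intros i Hi |]; apply H; lia.
Qed.

Lemma rprod_le n f g : (forall i, (i < n)%nat -> 0 < f i <= g i) -> rprod n f <= rprod n g.
Proof.
  induction n; intros H; simpl; [lra |].
  assert (0 < rprod n f) by (apply rprod_pos; intros i Hi; apply H; lia).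
  assert (0 < f n <= g n) by (apply H; lia).
  apply Rmult_le_compat; try lra. apply IHn. intros i Hi. apply H. lia.
Qed.

Lemma rprod_lt n f g j : (forall i, (i < n)%nat -> 0 < f i <= g i) ->
  (j < n)%nat -> f j < g j -> rprod n f < rprod n g.
Proof.
  induction n; intros H Hj Hlt; [lia |]. simpl.
  assert (Hf : 0 < rprod n f) by (apply rprod_pos; intros i Hi; apply H; lia).
  assert (Hle : rprod n f <= rprod n g) by (apply rprod_le; intros i Hi; apply H; lia).
  assert (Hn : 0 < f n <= g n) by (apply H; lia).
  destruct (Nat.eq_dec j n) as [-> | Hne].
  - apply Rle_lt_trans with (rprod n g * f n); [apply Rmult_le_compat_r |
      apply Rmult_lt_compat_l]; lra.
  - assert (rprod n f < rprod n g) by (apply IHn; [intros i Hi; apply H; lia | lia | easy]).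
    apply Rlt_le_trans with (rprod n g * f n); [apply Rmult_lt_compat_r |
      apply Rmult_le_compat_l]; lra.
Qed.

Lemma rprod_mul_exp n f h : rprod n (fun i => f i * exp (h i)) = rprod n f * exp (rsum n h).
Proof. induction n; simpl; [rewrite exp_0; ring |]. rewrite IHn, exp_plus; ring. Qed.

Definition rsum2 (N K : nat) (f : nat -> nat -> R) : R := rsum N (fun n => rsum K (f n)).
Definition rprod2 (N K : nat) (f : nat -> nat -> R) : R := rprod N (fun n => rprod K (f n)).

Lemma rsum2_ext N K f g : (forall n k, (n < N)%nat -> (k < K)%nat -> f n k = g n k) ->
  rsum2 N K f = rsum2 N K g.
Proof. intros H. apply rsum_ext. intros n Hn. apply rsum_ext. auto. Qed.

Lemma rsum2_plus N K f g : rsum2 N K (fun n k => f n k + g n k) = rsum2 N K f + rsum2 N K g.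
Proof. unfold rsum2. rewrite <- rsum_plus. apply rsum_ext. intros. apply rsum_plus. Qed.

Lemma rsum2_minus N K f g : rsum2 N K (fun n k => f n k - g n k) = rsum2 N K f - rsum2 N K g.
Proof. unfold rsum2. rewrite <- rsum_minus. apply rsum_ext. intros. apply rsum_minus. Qed.

Lemma rsum2_scal N K c f : rsum2 N K (fun n k => c * f n k) = c * rsum2 N K f.
Proof. unfold rsum2. rewrite <- rsum_scal. apply rsum_ext. intros. apply rsum_scal. Qed.

Lemma rsum2_const N K c : rsum2 N K (fun _ _ => c) = INR (N * K) * c.
Proof.
  unfold rsum2. rewrite (rsum_ext N _ (fun _ => INR K * c)) by (intros; apply rsum_const).
  rewrite rsum_const, mult_INR. ring.
Qed.

Lemma rprod2_ext N K f g : (forall n k, (n < N)%nat -> (k < K)%nat -> f n k = g n k) ->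
  rprod2 N K f = rprod2 N K g.
Proof. intros H. apply rprod_ext. intros n Hn. apply rprod_ext. auto. Qed.

Lemma rprod2_pos N K f : (forall n k, (n < N)%nat -> (k < K)%nat -> 0 < f n k) -> 0 < rprod2 N K f.
Proof. intros H. apply rprod_pos. intros n Hn. apply rprod_pos. auto. Qed.

Lemma rprod2_le N K f g : (forall n k, (n < N)%nat -> (k < K)%nat -> 0 < f n k <= g n k) ->
  rprod2 N K f <= rprod2 N K g.
Proof.
  intros H. apply rprod_le. intros n Hn.
  split; [apply rprod_pos; intros k Hk | apply rprod_le]; intros; apply H; auto.
Qed.

Lemma rprod2_lt N K f g n0 k0 : (forall n k, (n < N)%nat -> (k < K)%nat -> 0 < f n k <= g n k) ->
  (n0 < N)%nat -> (k0 < K)%nat -> f n0 k0 < g n0 k0 -> rprod2 N K f < rprod2 N K g.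
Proof.
  intros H Hn0 Hk0 Hlt. apply (rprod_lt _ _ _ n0); [| easy |].
  - intros n Hn. split; [apply rprod_pos; intros k Hk | apply rprod_le]; intros; apply H; auto.
  - apply (rprod_lt _ _ _ k0); auto.
Qed.

Lemma rprod2_mul_exp N K f h :
  rprod2 N K (fun n k => f n k * exp (h n k)) = rprod2 N K f * exp (rsum2 N K h).
Proof.
  unfold rprod2, rsum2. rewrite <- rprod_mul_exp. apply rprod_ext. intros. apply rprod_mul_exp.
Qed.

Lemma one_add_mul_exp_factor_bounds a c t : 0 < a -> 0 < c ->
  0 < a * (1 + c) * exp (c / (1 + c) * t) <= a * (1 + c * exp t).
Proof.
  intros Ha Hc. split.
  - apply Rmult_lt_0_compat; [apply Rmult_lt_0_compat; lra | apply exp_pos].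
  - rewrite Rmult_assoc. apply Rmult_le_compat_l; [lra | now apply one_add_mul_exp_le].
Qed.

Section ProductOfOneAddMulExp.

Variables (N K : nat) (a x : nat -> nat -> R) (c : R).
Hypothesis c_pos : 0 < c.
Hypothesis a_pos : forall n k, (n < N)%nat -> (k < K)%nat -> 0 < a n k.
Hypothesis rsum2_x_ge0 : 0 <= rsum2 N K x.

Lemma rprod2_one_add_mul_exp_lower :
  rprod2 N K (fun n k => a n k * (1 + c)) <=
  rprod2 N K (fun n k => a n k * (1 + c) * exp (c / (1 + c) * x n k)).
Proof.
  rewrite rprod2_mul_exp, rsum2_scal.
  rewrite <- (Rmult_1_r (rprod2 N K _)) at 1.
  apply Rmult_le_compat_l.
  - apply Rlt_le, rprod2_pos. intros n k Hn Hk. apply Rmult_lt_0_compat; [auto | lra].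
  - pose proof (exp_ineq1_le (c / (1 + c) * rsum2 N K x)).
    assert (0 <= c / (1 + c) * rsum2 N K x)
      by (apply Rmult_le_pos; [apply Rlt_le, Rdiv_lt_0_compat |]; lra).
    lra.
Qed.

Lemma rprod2_one_add_mul_exp_ge :
  rprod2 N K (fun n k => a n k * (1 + c)) <= rprod2 N K (fun n k => a n k * (1 + c * exp (x n k))).
Proof.
  eapply Rle_trans; [apply rprod2_one_add_mul_exp_lower |].
  apply rprod2_le. intros n k Hn Hk. now apply one_add_mul_exp_factor_bounds; auto.
Qed.

Lemma rprod2_one_add_mul_exp_gt n0 k0 : (n0 < N)%nat -> (k0 < K)%nat -> x n0 k0 <> 0 ->
  rprod2 N K (fun n k => a n k * (1 + c)) < rprod2 N K (fun n k => a n k * (1 + c * exp (x n k))).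
Proof.
  intros Hn0 Hk0 Hx.
  eapply Rle_lt_trans; [apply rprod2_one_add_mul_exp_lower |].
  apply (rprod2_lt _ _ _ _ n0 k0); auto.
  - intros n k Hn Hk. now apply one_add_mul_exp_factor_bounds; auto.
  - rewrite Rmult_assoc. apply Rmult_lt_compat_l; [auto | now apply one_add_mul_exp_lt].
Qed.

End ProductOfOneAddMulExp.

Section BitAllocation.

Variables (M N K : nat) (B : R) (S2 S3 : nat -> nat -> R).
Hypothesis hM : (2 <= M)%nat.
Hypothesis hN : (1 <= N)%nat.
Hypothesis hK : (1 <= K)%nat.
Hypothesis hS2 : forall n k, (n < N)%nat -> (k < K)%nat -> 0 <= S2 n k.
Hypothesis hS3 : forall n k, (n < N)%nat -> (k < K)%nat -> 0 < S3 n k.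

Let L := INR M - 1.
Let G := Gamma ((2 * INR M - 1) / (INR M - 1)).
Let T := rsum2 N K (fun p q => log2 ((1 + S2 p q) / S3 p q)).
Let C0 := B / INR (N * K) + L / INR (N * K) * T.
Let b := Bstar M N K B S2 S3.
(* [c] is the common value of [G * 2 ^ (- b n k / L) * S3 n k / (1 + S2 n k)]. *)
Let c := G / Rpower 2 (C0 / L).
Let gap (v : nat -> nat -> R) n k := ln 2 / L * (b n k - v n k).

Lemma L_ge_1 : 1 <= L.
Proof. unfold L. apply le_INR in hM. simpl in hM. lra. Qed.

Lemma ln2_div_L_pos : 0 < ln 2 / L.
Proof. pose proof L_ge_1. pose proof ln_lt_2. apply Rdiv_lt_0_compat; lra. Qed.

Lemma NK_pos : 0 < INR (N * K).
Proof. apply lt_0_INR. lia. Qed.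

Lemma c_pos : 0 < c.
Proof.
  pose proof L_ge_1.
  apply Rdiv_lt_0_compat; [| apply exp_pos].
  apply Gamma_pos. fold L.
  replace ((2 * INR M - 1) / L) with (2 + 1 / L) by (unfold L in *; field; lra).
  assert (0 < 1 / L <= 1).
  { split; [apply Rdiv_lt_0_compat; lra |].
    apply Rmult_le_reg_r with L; [lra |]. field_simplify; lra. }
  lra.
Qed.

Lemma rsum2_Bstar : rsum2 N K b = B.
Proof.
  pose proof NK_pos. pose proof ln_lt_2.
  transitivity (rsum2 N K (fun n k => C0 + L * (-1 * log2 ((1 + S2 n k) / S3 n k)))).
  - apply rsum2_ext. intros n k Hn Hk.
    pose proof (hS2 n k Hn Hk). pose proof (hS3 n k Hn Hk).
    unfold b, Bstar, C0. fold L.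
    change (rsum N _) with T. unfold log2.
    rewrite !ln_div by lra. field. lra.
  - rewrite rsum2_plus, rsum2_const, !rsum2_scal. fold T. unfold C0. field. lra.
Qed.

Lemma rsum2_gap v : rsum2 N K (gap v) = ln 2 / L * (B - rsum2 N K v).
Proof. unfold gap. rewrite rsum2_scal, rsum2_minus, rsum2_Bstar. reflexivity. Qed.

Lemma objective_factor v :
  objective M N K S2 S3 v = rprod2 N K (fun n k => (1 + S2 n k) * (1 + c * exp (gap v n k))).
Proof.
  pose proof L_ge_1. pose proof ln2_div_L_pos.
  unfold objective. fold G L.
  change (rprod N (fun n => rprod K _)) with (rprod2 N K (fun n k =>
    1 + S2 n k + G * Rpower 2 (- v n k / L) * S3 n k)).
  apply rprod2_ext. intros n k Hn Hk.
  pose proof (hS2 n k Hn Hk). pose proof (hS3 n k Hn Hk).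
  unfold c, gap, Rpower.
  replace (ln 2 / L * (b n k - v n k))
    with (C0 / L * ln 2 + (ln (S3 n k / (1 + S2 n k)) + - v n k / L * ln 2)).
  - rewrite !exp_plus, exp_ln by (apply Rdiv_lt_0_compat; lra).
    field. split; [lra | apply Rgt_not_eq, exp_pos].
  - pose proof NK_pos. pose proof ln_lt_2.
    unfold b, Bstar, C0, log2. fold L. change (rsum N _) with T.
    field. repeat split; lra.
Qed.

Lemma objective_Bstar :
  objective M N K S2 S3 b = rprod2 N K (fun n k => (1 + S2 n k) * (1 + c)).
Proof.
  rewrite objective_factor. apply rprod2_ext. intros n k _ _.
  unfold gap. rewrite Rminus_diag, Rmult_0_r, exp_0, Rmult_1_r. reflexivity.
Qed.

Lemma Bstar_feasible : feasible N K B b.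
Proof. change (rsum2 N K b <= B). rewrite rsum2_Bstar. lra. Qed.

Lemma rsum2_gap_ge0 v : feasible N K B v -> 0 <= rsum2 N K (gap v).
Proof.
  intros Hv. change (rsum2 N K v <= B) in Hv. rewrite rsum2_gap.
  pose proof ln2_div_L_pos. apply Rmult_le_pos; lra.
Qed.

Lemma one_add_S2_pos n k : (n < N)%nat -> (k < K)%nat -> 0 < 1 + S2 n k.
Proof. intros Hn Hk. pose proof (hS2 n k Hn Hk). lra. Qed.

Lemma objective_Bstar_le v : feasible N K B v -> objective M N K S2 S3 b <= objective M N K S2 S3 v.
Proof.
  intros Hv. rewrite objective_Bstar, objective_factor.
  apply rprod2_one_add_mul_exp_ge; [apply c_pos | apply one_add_S2_pos | now apply rsum2_gap_ge0].
Qed.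

Lemma objective_Bstar_lt v n k : feasible N K B v -> (n < N)%nat -> (k < K)%nat -> v n k <> b n k ->
  objective M N K S2 S3 b < objective M N K S2 S3 v.
Proof.
  intros Hv Hn Hk Hvb. rewrite objective_Bstar, objective_factor.
  apply (rprod2_one_add_mul_exp_gt _ _ _ _ _ c_pos one_add_S2_pos (rsum2_gap_ge0 v Hv) n k Hn Hk).
  pose proof ln2_div_L_pos. unfold gap. intros Hgap.
  apply Rmult_integral in Hgap as [Hgap | Hgap]; lra.
Qed.

End BitAllocation.

Theorem theorem3 (M N K : nat) (B : R) (S2 S3 : nat -> nat -> R)
  (hM : (2 <= M)%nat) (hN : (1 <= N)%nat) (hK : (1 <= K)%nat)
  (hS2 : forall n k, (n < N)%nat -> (k < K)%nat -> 0 <= S2 n k)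
  (hS3 : forall n k, (n < N)%nat -> (k < K)%nat -> 0 < S3 n k) :
  is_minimizer M N K B S2 S3 (Bstar M N K B S2 S3) /\
  (forall Bv, is_minimizer M N K B S2 S3 Bv ->
     forall n k, (n < N)%nat -> (k < K)%nat -> Bv n k = Bstar M N K B S2 S3 n k).
Proof.
  assert (Hfeas : feasible N K B (Bstar M N K B S2 S3)) by now apply Bstar_feasible.
  split.
  - split; [exact Hfeas |]. intros Bv HBv. now apply objective_Bstar_le.
  - intros Bv [HBv Hmin] n k Hn Hk.
    destruct (Req_dec (Bv n k) (Bstar M N K B S2 S3 n k)) as [E | E]; [exact E | exfalso].
    pose proof (Hmin _ Hfeas).
    pose proof (objective_Bstar_lt M N K B S2 S3 hM hN hK hS2 hS3 Bv n k HBv Hn Hk E).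
    lra.
Qed.
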